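(* For every base $b\ge 2$ there exist infinitely many $b$-wARH numbers that are not $b$-Niven numbers.
   Context: Fix a base $b\ge 2$. $s_b(N)$ is the sum of the base-$b$ digits of $N$. For a positive integer $X$, its reversal $X^R$ is the integer whose base-$b$ representation is that of $X$ written in reverse order (leading zeros of the result are dropped). A positive integer $N$ is a $b$-wARH number if there exists an integer $A\ge 0$ such that $N=(A+s_b(N))+(A+s_b(N))^R$. A positive integer $N$ is a $b$-Niven number if $s_b(N)$ divides $N$. *)

From mathcomp Require Import all_boot.
Set Implicit Arguments. Unset Strict Implicit. Unset Printing Implicit Defensive.

(* Base-b digits of n, least significant first; uses fuel (n suffices for b >= 2). *)
Fixpoint digits_fuel (fuel b n : nat) : seq nat :=
  match fuel with
  | 0 => [::]
  | f.+1 => if n == 0 then [::] else (n %% b) :: digits_fuel f b (n %/ b)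
  end.

Definition digits (b n : nat) : seq nat := digits_fuel n b n.

Definition fromdigits (b : nat) (s : seq nat) : nat :=
  foldr (fun d acc => d + b * acc) 0 s.

Definition sdig (b n : nat) : nat := sumn (digits b n).

(* X^R : reverse the base-b representation (leading zeros of the result vanish) *)
Definition rev_num (b x : nat) : nat := fromdigits b (rev (digits b x)).

Definition wARH (b N : nat) : Prop :=
  0 < N /\ exists A : nat, N = (A + sdig b N) + rev_num b (A + sdig b N).

Definition Niven (b N : nat) : Prop := 0 < N /\ sdig b N %| N.

From mathcomp Require Import all_boot.
From mathcomp Require Import zify.

(* Two explicit families of wARH numbers that are not Niven.
   - Odd base b (so b >= 3): N = 2 * R_m, where R_m = 11...1 is the base-b
     repunit of length m.  Its digits are m twos, so s_b(N) = 2m, and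
     N = X + X^R for the palindrome X = R_m, with A = R_m - 2m >= 0.  If b
     divides m, then 2m | 2 R_m would give b | R_m, but R_m = 1 (mod b).
   - Even base b: N = b^k + 1 (k >= 1), whose digits are 1 0...0 1, so
     s_b(N) = 2, and N = X + X^R for X = b^k (X^R = 1), with A = b^k - 2.
     N is odd, hence not divisible by s_b(N) = 2.
   The file first computes digits, digit sums and reversals of numbers given
   by a canonical digit string (digits < b, nonzero last digit), then states a
   general criterion producing the wARH witness A, proves the two families,
   and concludes by choosing the length m (resp. exponent k) large. *)

Section CanonicalDigits.
Variable b : nat.
Hypothesis hb : 2 <= b.

Lemma digits_fuel_irrelevant f : forall g n, n <= f -> n <= g ->
  digits_fuel f b n = digits_fuel g b n.
Proof.
elim: f => [|f IH] [|g] n /= hf hg //; try by have -> : n = 0 by lia.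
case: eqP => // /eqP n0; congr (_ :: _).
have lt_div : n %/ b < n by apply: ltn_Pdiv; lia.
apply: IH; lia.
Qed.

Lemma digitsE n :
  digits b n = if n == 0 then [::] else n %% b :: digits b (n %/ b).
Proof.
rewrite /digits; case: n => [|n] //=.
congr (_ :: _); apply: digits_fuel_irrelevant => //.
have := ltn_Pdiv hb (ltn0Sn n); lia.
Qed.

Definition canonical (s : seq nat) : bool :=
  all (fun d => d < b) s && (last 1 s != 0).

Lemma canonical_cons d t : canonical (d :: t) -> d < b /\ canonical t.
Proof.
case/andP => /andP [hd ht] hl; split=> //; apply/andP; split=> //.
by case: t hl {ht}.
Qed.

(* A nonempty canonical string denotes a positive number, so its digit
   expansion does not stop early. *)
Lemma fromdigits_canonical_pos s :
  s != [::] -> canonical s -> 0 < fromdigits b s.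
Proof.
elim: s => [|d [|e t] IH] // _ /[dup] hc /canonical_cons [_ ht].
- by case/andP: hc => _ /=; lia.
- by have /= := IH isT ht; nia.
Qed.

Lemma digits_fromdigits s : canonical s -> digits b (fromdigits b s) = s.
Proof.
elim: s => [|d t IH] hc; first by rewrite digitsE.
have hpos := fromdigits_canonical_pos (d :: t) isT hc.
case/canonical_cons: hc => hd ht.
rewrite -[fromdigits b _]/(d + b * fromdigits b t) in hpos *; rewrite digitsE.
have -> : (d + b * fromdigits b t == 0) = false by lia.
rewrite addnC mulnC modnMDl modn_small // divnMDl ?divn_small ?addn0 ?IH //.
lia.
Qed.

Lemma sdig_fromdigits s : canonical s -> sdig b (fromdigits b s) = sumn s.
Proof. by move=> hc; rewrite /sdig digits_fromdigits. Qed.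

Lemma rev_num_fromdigits s :
  canonical s -> rev_num b (fromdigits b s) = fromdigits b (rev s).
Proof. by move=> hc; rewrite /rev_num digits_fromdigits. Qed.

Lemma canonical_nseq m c : 0 < c < b -> canonical (nseq m c).
Proof.
move=> /andP [c0 cb]; apply/andP; split; first by rewrite all_nseq cb orbT.
by case: m => //= m; elim: m => //=; lia.
Qed.

End CanonicalDigits.

Lemma fromdigits_cat b s t :
  fromdigits b (s ++ t) = fromdigits b s + b ^ size s * fromdigits b t.
Proof. elim: s => [|d s IH] /=; rewrite ?expn0 ?expnS ?IH; lia. Qed.

Definition repunit (b m : nat) : nat := fromdigits b (nseq m 1).

Lemma fromdigits_nseq b m c : fromdigits b (nseq m c) = c * repunit b m.
Proof. rewrite /repunit; elim: m => [|m IH] /=; rewrite ?IH; lia. Qed.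

Lemma repunit_mod b m : 2 <= b -> 0 < m -> repunit b m %% b = 1.
Proof.
move=> hb; case: m => [|m] // _.
by rewrite /repunit /= addnC mulnC modnMDl modn_small.
Qed.

(* In base b >= 3, a repunit of length m >= 2 is at least 2m; this is what
   makes the witness A = R_m - 2m nonnegative. *)
Lemma repunit_ge b m : 3 <= b -> 1 < m -> 2 * m <= repunit b m.
Proof.
move=> hb; case: m => [|[|m]] // _; rewrite /repunit.
by elim: m => [|m IH] /=; [lia | move: IH => /= IH; nia].
Qed.

Lemma wARH_of_reversal_sum b N X :
  0 < N -> sdig b N <= X -> N = X + rev_num b X -> wARH b N.
Proof. by move=> N0 hX hN; split=> //; exists (X - sdig b N); rewrite subnK. Qed.

Lemma twice_repunit_wARH_not_Niven b m :
  3 <= b -> 0 < m -> b %| m ->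
  wARH b (2 * repunit b m) /\ ~ Niven b (2 * repunit b m).
Proof.
move=> hb m0 bm; have m1 : 1 < m by have := dvdn_leq m0 bm; lia.
have hR := @repunit_ge b m hb m1.
have hsum : sdig b (2 * repunit b m) = 2 * m.
  rewrite -fromdigits_nseq sdig_fromdigits ?canonical_nseq ?sumn_nseq; lia.
have hrev : rev_num b (repunit b m) = repunit b m.
  by rewrite rev_num_fromdigits ?canonical_nseq ?rev_nseq //; lia.
split.
- by apply: (@wARH_of_reversal_sum b _ (repunit b m)); rewrite ?hsum ?hrev; lia.
- case=> _; rewrite hsum dvdn_pmul2l // => mR.
  have /eqP := dvdn_trans bm mR; rewrite /dvdn repunit_mod; lia.
Qed.

Lemma power_plus_one_wARH_not_Niven b k :
  2 <= b -> ~~ odd b ->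
  wARH b (b ^ k.+1 + 1) /\ ~ Niven b (b ^ k.+1 + 1).
Proof.
move=> hb ev; set high := nseq k 0 ++ [:: 1].
have canonical_high c : c < b -> canonical b (c :: high).
  by rewrite /canonical /high /= last_cat all_cat all_nseq /=; lia.
have cX := canonical_high 0 (ltnW hb).
have cN := canonical_high 1 hb.
have vhigh : fromdigits b high = b ^ k.
  by rewrite fromdigits_cat fromdigits_nseq size_nseq /=; lia.
have vX : fromdigits b (0 :: high) = b ^ k.+1 by rewrite /= vhigh expnS.
have vN : fromdigits b (1 :: high) = b ^ k.+1 + 1 by move: vX => /=; lia.
have hsum : sdig b (b ^ k.+1 + 1) = 2.
  by rewrite -vN sdig_fromdigits // /= sumn_cat sumn_nseq.
have hrev : rev_num b (b ^ k.+1) = 1.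
  rewrite -vX rev_num_fromdigits // rev_cons /high rev_cat rev_nseq /=.
  by rewrite -cats1 fromdigits_cat fromdigits_nseq /= !muln0.
have bk2 : 2 <= b ^ k.+1 by rewrite expnS; have := expn_gt0 b k; nia.
split.
- by apply: (@wARH_of_reversal_sum b _ (b ^ k.+1)); rewrite ?hsum ?hrev; lia.
- case=> _; rewrite hsum dvdn2 oddD oddX /=; by case: (odd b) ev.
Qed.

Theorem corollary8 (b : nat) (hb : 2 <= b) :
  forall M : nat, exists N : nat, M < N /\ wARH b N /\ ~ Niven b N.
Proof.
move=> M; case: (boolP (odd b)) => hodd.
- have hb3 : 3 <= b by case: b hb hodd => [|[|[|]]].
  exists (2 * repunit b (b * M.+1)); split; last first.
    by apply: twice_repunit_wARH_not_Niven; rewrite ?dvdn_mulr //; lia.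
  have := @repunit_ge b (b * M.+1) hb3; nia.
- exists (b ^ M.+1 + 1); split; last exact: power_plus_one_wARH_not_Niven.
  have := ltn_expl M.+1 hb; lia.
Qed.
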